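(* Let $\boldsymbol{u}^\star\in\mathbb{R}^n$ and $f(\boldsymbol{u})=\frac12\|\boldsymbol{u}\boldsymbol{u}^{\mathrm T}-\boldsymbol{u}^\star{\boldsymbol{u}^\star}^{\mathrm T}\|_1$ on $\mathbb{R}^n$. Then every second-order stationary point of $f$ is a global minimizer of $f$.
   Context: $\|\cdot\|_1$ is the entrywise $\ell_1$-norm. $\partial f$ denotes the subdifferential (Fréchet, limiting and Clarke subdifferentials coincide for this $f$). The second subderivative is $d^2f(\boldsymbol{x};\boldsymbol{v})(\boldsymbol{w})=\liminf_{t\searrow0,\ \boldsymbol{w}'\to\boldsymbol{w}}\frac{f(\boldsymbol{x}+t\boldsymbol{w}')-f(\boldsymbol{x})-t\,\boldsymbol{v}^{\mathrm T}\boldsymbol{w}'}{t^2/2}$. A point $\boldsymbol{x}$ is a second-order stationary point of $f$ if $\boldsymbol{0}\in\partial f(\boldsymbol{x})$ and $d^2f(\boldsymbol{x};\boldsymbol{0})(\boldsymbol{w})\ge0$ for all $\boldsymbol{w}\in\mathbb{R}^n$. *)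

From HB Require Import structures.
From mathcomp Require Import all_boot all_order all_algebra.
From mathcomp Require Import all_classical all_reals ereal.
Set Implicit Arguments. Unset Strict Implicit. Unset Printing Implicit Defensive.
Import Order.TTheory GRing.Theory Num.Theory.
Local Open Scope classical_set_scope.
Local Open Scope ring_scope.

Section Defs.
Variables (R : realType) (n : nat).
Local Notation vec := ('I_n -> R).

Definition dotv (x y : vec) : R := \sum_(i < n) x i * y i.
Definition norm2 (x : vec) : R := Num.sqrt (dotv x x).
Definition subv (x y : vec) : vec := fun i => x i - y i.
Definition zerov : vec := fun _ => 0.

Definition fobj (us u : vec) : R :=
  2^-1 * \sum_(i < n) \sum_(j < n) `| u i * u j - us i * us j |.

(* Frechet subgradient: liminf_{y -> x, y <> x}
   (f y - f x - <v, y - x>) / ||y - x|| >= 0,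
   the liminf written out as sup_{d>0} inf_{0<||y-x||<d}. *)
Definition frechet_subgrad (f : vec -> R) (x v : vec) : Prop :=
  (0 <= ereal_sup
     [set ereal_inf
        [set ((f y - f x - dotv v (subv y x)) / norm2 (subv y x))%:E
        | y in [set y | y != x /\ (norm2 (subv y x) < d)%R]]
     | d in [set d : R | (0 < d)%R]])%E.

(* Second subderivative d^2 f(x; v)(w) = liminf_{t \searrow 0, w' -> w}
   (f(x + t w') - f x - t <v, w'>) / (t^2 / 2), written as
   sup_{d>0} inf_{0<t<d, ||w'-w||<d}. Value in extended reals. *)
Definition second_subderiv (f : vec -> R) (x v w : vec) : \bar R :=
  ereal_sup
    [set ereal_inf
       [set ((f (fun i => x i + p.1 * p.2 i) - f x - p.1 * dotv v p.2)
               / (p.1 ^+ 2 / 2))%:E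
       | p in [set p : R * vec | 0 < p.1 < d /\ norm2 (subv p.2 w) < d]]
    | d in [set d : R | 0 < d]].

Definition second_order_stationary (f : vec -> R) (x : vec) : Prop :=
  frechet_subgrad f x zerov /\
  forall w : vec, (0 <= second_subderiv f x zerov w)%E.

Definition global_minimizer (f : vec -> R) (x : vec) : Prop :=
  forall y : vec, f x <= f y.
End Defs.

From mathcomp Require Import all_boot all_order all_algebra.
From mathcomp Require Import all_classical all_reals.
From mathcomp Require Import ereal topology normedtype ring lra.
Import Order.TTheory GRing.Theory Num.Theory.
Local Open Scope classical_set_scope.
Local Open Scope ring_scope.

(* Write s for the target vector, so that f >= 0 = f(s).  It is enough to
   show that f(u) > 0 yields a coordinate direction w along which
   f(u + t w) <= f(u) - t^2/2 for small t > 0, since then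
   d^2 f(u; 0)(w) <= -1.  Let p_j = u_j s_j.  If some p_k <> 0 and the |u_j|
   with p_k p_j > 0 weigh no more than the others, shrinking |u_k| works.
   Otherwise all p_j share one sign, and a sign flip of the coordinates,
   which leaves f invariant, makes u and s nonnegative.  There, raising a
   coordinate u_k < s_k decreases f quadratically as soon as its first-order
   slope is <= 0 (the diagonal term is concave there), lowering a coordinate
   u_k > s_k decreases f as soon as its slope is < 0, and the slopes of two
   such moves add up to at most 0; if only one kind of coordinate exists, its
   slope is - sum_j u_j. *)

Section Scalar.
Context {R : realType}.
Implicit Types (a b c x y t sg : R).

Lemma normr_sqr1 x : x ^+ 2 = 1 -> `|x| = 1.
Proof. by move/eqP; rewrite sqrf_eq1 => /orP[]/eqP->; rewrite ?normrN normr1. Qed.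

Lemma normrB_opposite x y : x * y <= 0 -> `|x - y| = `|x| + `|y|.
Proof.
case: (lerP 0 x) => x0; case: (lerP 0 y) => y0 xy.
- have [->|->] : x = 0 \/ y = 0 by nra.
  + by rewrite sub0r normrN normr0 add0r.
  + by rewrite subr0 normr0 addr0.
- by rewrite (ger0_norm x0) (ltr0_norm y0) ger0_norm //; lra.
- by rewrite (ltr0_norm x0) (ger0_norm y0) ler0_norm; lra.
- nra.
Qed.

Lemma shrink_toward0 a t : a + t * - Num.sg a = Num.sg a * (`|a| - t).
Proof. by rewrite {1}[a]numEsg; ring. Qed.

Lemma offdiag_toward0 a b c t : a * b * c <= 0 -> 0 <= t <= `|a| ->
  `|a * b - c + t * - Num.sg a * b| - `|a * b - c| = - (t * `|b|).
Proof.
move=> abc /andP[t0 ta].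
have [a0|a0] := eqVneq a 0.
  have -> : t = 0 by move: ta; rewrite a0 normr0; lra.
  by rewrite !mul0r addr0 subrr oppr0.
have -> : a * b - c + t * - Num.sg a * b = Num.sg a * (`|a| - t) * b - c.
  by rewrite -shrink_toward0; ring.
have sg_abc : Num.sg a * b * c <= 0.
  have a_gt0 : 0 < `|a| by rewrite normr_gt0.
  have e : Num.sg a * b * c * `|a| = a * b * c.
    by rewrite [X in _ = X * b * c]numEsg; ring.
  by rewrite -(pmulr_lle0 _ a_gt0) e.
rewrite !normrB_opposite; last first.
- have -> : Num.sg a * (`|a| - t) * b * c = (`|a| - t) * (Num.sg a * b * c) by ring.
  by rewrite mulr_ge0_le0 ?subr_ge0.
- exact: abc.
rewrite !normrM normr_sg a0 mul1r (ger0_norm (x := `|a| - t)) ?subr_ge0 //; ring.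
Qed.

Lemma diag_toward0 a c t : a != 0 -> 0 <= t <= `|a| ->
  `|(a + t * - Num.sg a) ^+ 2 - c| - `|a ^+ 2 - c| <= 2 * t * `|a| - t ^+ 2.
Proof.
move=> a0 /andP[t0 ta].
rewrite shrink_toward0 exprMn sqr_sg a0 mul1r.
apply: le_trans (lerB_dist _ _) _.
have -> : (`|a| - t) ^+ 2 - c - (a ^+ 2 - c) = - (2 * t * `|a| - t ^+ 2).
  by rewrite -[a ^+ 2]real_normK ?num_real //; ring.
by rewrite normrN ger0_norm //; nra.
Qed.

Lemma norm_step_signed A x sg t : `|sg| = 1 -> 0 <= t -> 0 <= x ->
    (sg * A < 0 -> t * x <= `|A|) ->
  `|A + t * sg * x| - `|A| <= t * ((if sg * A < 0 then -1 else 1) * x).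
Proof.
move=> sg1 t0 x0 small; case: ifP => sgA; last first.
  have := ler_normD A (t * sg * x).
  by rewrite !normrM sg1 mulr1 (ger0_norm t0) (ger0_norm x0) mul1r; lra.
have A_eq : A = - (sg * `|A|).
  have sg2 : sg * sg = 1 by rewrite -expr2 -real_normK ?num_real // sg1 expr1n.
  have normA : `|A| = - (sg * A) by rewrite -(ltr0_norm sgA) normrM sg1 mul1r.
  by rewrite normA mulrN opprK mulrA sg2 mul1r.
have tx := small sgA.
rewrite [X in `|X + _|]A_eq.
have -> : - (sg * `|A|) + t * sg * x = - (sg * (`|A| - t * x)) by ring.
by rewrite normrN normrM sg1 mul1r ger0_norm ?subr_ge0 //; lra.
Qed.

Lemma diag_up a b t : 0 <= a -> 0 <= t -> a + t < b ->
  `|(a + t) ^+ 2 - b ^+ 2| - `|a ^+ 2 - b ^+ 2| = - (2 * t * a + t ^+ 2).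
Proof. by move=> a0 t0 ab; rewrite !ler0_norm; [ring | nra | nra]. Qed.

Lemma diag_down a b t : 0 <= b -> 0 <= t -> b < a - t ->
  `|(a - t) ^+ 2 - b ^+ 2| - `|a ^+ 2 - b ^+ 2| = t ^+ 2 - 2 * t * a.
Proof. by move=> b0 t0 ab; rewrite !ger0_norm; [ring | nra | nra]. Qed.

Lemma common_sign (I : Type) (p : I -> R) : (forall i j, 0 <= p i * p j) ->
  exists2 eps : R, eps ^+ 2 = 1 & forall j, 0 <= eps * p j.
Proof.
move=> pp; have [[i pi]|no_pos] := boolp.pselect (exists i, 0 < p i).
  by exists 1 => [|j]; rewrite ?expr1n // mul1r; have := pp i j; nra.
exists (-1) => [|j]; first by rewrite sqrrN expr1n.
by rewrite mulN1r oppr_ge0 leNgt; apply/negP => pj; apply: no_pos; exists j.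
Qed.

Lemma align_sign x y : 0 <= x * y ->
  0 <= (if x + y < 0 then -1 else 1) * x /\ 0 <= (if x + y < 0 then -1 else 1) * y.
Proof. by case: ifP => xy; rewrite ?mulN1r ?mul1r ?oppr_ge0; nra. Qed.

Lemma near0_mul_le x y : 0 < y -> \forall t \near 0^'+, t * x <= y.
Proof.
move=> y_gt0; near=> t.
have t_ge0 : 0 <= t by near: t; exact: nbhs_right_ge.
have x1_gt0 : 0 < `|x| + 1 by rewrite ltr_wpDl.
have : t < y / (`|x| + 1) by near: t; apply: nbhs_right_lt; rewrite divr_gt0.
rewrite ltr_pdivlMr // => ty.
have := ler_wpM2l t_ge0 (ler_norm x); nra.
Unshelve. all: by end_near.
Qed.

End Scalar.

Lemma sum_cross_support {V : nmodType} {n : nat} (D : 'I_n -> 'I_n -> V) (k : 'I_n) :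
  (forall i j, D i j = D j i) -> (forall i j, i != k -> j != k -> D i j = 0) ->
  \sum_i \sum_j D i j = D k k + (\sum_(j | j != k) D k j) *+ 2.
Proof.
move=> Dsym Dout; rewrite (bigD1 k) //= (bigD1 k) //= -addrA mulr2n.
congr (_ + (_ + _)); apply: eq_bigr => i ik.
by rewrite (bigD1 k) //= big1 => [|j jk]; [rewrite addr0 Dsym | exact: Dout].
Qed.

Section QuadraticDescent.
Context {R : realType} {n : nat}.
Local Notation vec := ('I_n -> R).

Definition quadratic_descent (f : vec -> R) (x w : vec) : Prop :=
  exists2 c : R, 0 < c &
    \forall t \near 0^'+, f (fun i => x i + t * w i) <= f x - c * t ^+ 2.

Lemma dotv0 (w : vec) : dotv (@zerov R n) w = 0.
Proof. by rewrite /dotv big1 // => i _; rewrite mul0r. Qed.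

Lemma norm2_subvv (w : vec) : norm2 (subv w w) = 0.
Proof.
by rewrite /norm2 /dotv big1 ?sqrtr0 // => i _; rewrite /subv subrr mul0r.
Qed.

Lemma second_subderiv_lt0 (f : vec -> R) (x w : vec) :
  quadratic_descent f x w -> (second_subderiv f x (@zerov R n) w < 0)%E.
Proof.
move=> [c c_gt0 descent].
apply: (@le_lt_trans _ _ (- (2 * c))%:E); last by rewrite lte_fin; lra.
apply: ge_ereal_sup => _ [d d_gt0 <-].
have [t [t_gt0 t_ltd ft]] : exists t, [/\ 0 < t, t < d &
    f (fun i => x i + t * w i) <= f x - c * t ^+ 2].
  apply: (@filter_ex _ _ (at_right_proper_filter (0 : R))).
  near=> t; split; near: t;
    [exact: nbhs_right_gt | exact: nbhs_right_lt | exact: descent].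
apply: (@le_trans _ _ (((f (fun i => x i + t * w i) - f x
    - t * dotv (@zerov R n) w) / (t ^+ 2 / 2))%:E)).
  by apply: ereal_inf_lbound; exists (t, w) => //=; rewrite norm2_subvv t_gt0 t_ltd.
have t2_gt0 : 0 < t ^+ 2 / 2 by rewrite divr_gt0 // exprn_gt0.
by rewrite lee_fin dotv0 mulr0 subr0 ler_pdivrMr //; lra.
Unshelve. all: by end_near.
Qed.

End QuadraticDescent.

Section Objective.
Context {R : realType} {n : nat}.
Local Notation vec := ('I_n -> R).
Implicit Types (s u w d e : vec).

Lemma fobj_ge0 s u : 0 <= fobj s u.
Proof.
by rewrite /fobj mulr_ge0 ?invr_ge0 // !sumr_ge0 // => i _; rewrite sumr_ge0.
Qed.

Lemma fobj_self s : fobj s s = 0.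
Proof.
by rewrite /fobj big1 ?mulr0 // => i _; rewrite big1 // => j _; rewrite subrr normr0.
Qed.

Lemma fobj_signed s u d e : (forall i, d i ^+ 2 = 1) ->
    (forall i j, d i * d j = e i * e j) ->
  fobj (fun i => e i * s i) (fun i => d i * u i) = fobj s u.
Proof.
move=> d2 de; congr (_ * _); apply: eq_bigr => i _; apply: eq_bigr => j _.
have -> : e i * s i * (e j * s j) = d i * d j * (s i * s j) by rewrite de; ring.
have -> : d i * u i * (d j * u j) - d i * d j * (s i * s j) =
    d i * d j * (u i * u j - s i * s j) by ring.
by rewrite !normrM !(normr_sqr1 _ (d2 _)) !mul1r.
Qed.

Lemma quadratic_descent_signed s u d e w : (forall i, d i ^+ 2 = 1) ->
    (forall i j, d i * d j = e i * e j) ->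
  quadratic_descent (fobj (fun i => e i * s i)) (fun i => d i * u i) w ->
  quadratic_descent (fobj s) u (fun i => d i * w i).
Proof.
move=> d2 de [c c_gt0 descent]; exists c => //; near=> t.
rewrite -(fobj_signed s u _ _ d2 de) -(fobj_signed _ _ _ _ d2 de).
have -> : (fun i => d i * (u i + t * (d i * w i))) = (fun i => d i * u i + t * w i).
  apply: boolp.funext => i.
  by rewrite mulrDr [d i * (t * _)]mulrCA [d i * (d i * _)]mulrA -expr2 d2 mul1r.
by near: t.
Unshelve. all: by end_near.
Qed.

End Objective.

Section CoordinateMoves.
Context {R : realType} {n : nat}.
Local Notation vec := ('I_n -> R).
Variables s u : vec.
Implicit Types k : 'I_n.

Definition coordv k (a : R) : vec := fun i => if i == k then a else 0.

Definition coord_change k (h : R) : R :=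
  \sum_(j | j != k) (`|u k * u j - s k * s j + h * u j| - `|u k * u j - s k * s j|)
  + 2^-1 * (`|(u k + h) ^+ 2 - s k ^+ 2| - `|u k ^+ 2 - s k ^+ 2|).

Lemma fobj_coord k h :
  fobj s (fun i => u i + coordv k h i) = fobj s u + coord_change k h.
Proof.
set v := fun i => _.
pose D i j : R := `|v i * v j - s i * s j| - `|u i * u j - s i * s j|.
have -> : fobj s v = fobj s u + 2^-1 * \sum_i \sum_j D i j.
  rewrite /fobj -mulrDr -big_split; congr (_ * _); apply: eq_bigr => i _.
  by rewrite -big_split; apply: eq_bigr => j _; rewrite /D /= subrKC.
have vE i : i != k -> v i = u i by rewrite /v /coordv => /negbTE->; rewrite addr0.
rewrite (sum_cross_support _ k); first last.
- by move=> i j ik jk; rewrite /D !vE // subrr.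
- by move=> i j; rewrite /D (mulrC (v i)) (mulrC (u i)) (mulrC (s i)).
have vk : v k = u k + h by rewrite /v /coordv eqxx.
rewrite /coord_change /D vk !expr2.
under eq_bigr => j jk do rewrite vE //.
have -> : \sum_(j | j != k) (`|(u k + h) * u j - s k * s j| - `|u k * u j - s k * s j|)
    = \sum_(j | j != k) (`|u k * u j - s k * s j + h * u j| - `|u k * u j - s k * s j|).
  by apply: eq_bigr => j _; congr (`|_| - _); ring.
rewrite mulr2n; lra.
Qed.

Lemma quadratic_descent_coord k sg :
    (\forall t \near 0^'+, coord_change k (t * sg) <= - (2^-1 * t ^+ 2)) ->
  quadratic_descent (fobj s) u (coordv k sg).
Proof.
move=> descent; exists 2^-1; first by rewrite invr_gt0.
near=> t.
have -> : (fun i => u i + t * coordv k sg i) = (fun i => u i + coordv k (t * sg) i).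
  by apply: boolp.funext => i; rewrite /coordv; case: ifP; rewrite ?mulr0.
by rewrite fobj_coord lerD2l; near: t.
Unshelve. all: by end_near.
Qed.

(* Shrinking |u k| by t <= |u k| changes f by at most t * agreement k - t^2/2. *)
Definition agreement k : R :=
  \sum_j (if 0 < u k * s k * (u j * s j) then `|u j| else - `|u j|).

Lemma agreement_opposite i j :
  u i * s i * (u j * s j) < 0 -> agreement i + agreement j <= 0.
Proof.
move=> opp; rewrite -big_split /=; apply: sumr_le0 => l _.
case: ifP => hi; case: ifP => hj; rewrite ?subrr ?addrN ?lexx //; try lra.
have := mulr_gt0 hi hj.
have -> : u i * s i * (u l * s l) * (u j * s j * (u l * s l))
    = u i * s i * (u j * s j) * ((u l * s l) ^+ 2) by ring.
by rewrite ltNge mulr_le0_ge0 ?sqr_ge0 // ltW.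
Qed.

Lemma descent_toward0 k : u k * s k != 0 -> agreement k <= 0 ->
  quadratic_descent (fobj s) u (coordv k (- Num.sg (u k))).
Proof.
move=> uks agree_le0.
have uk0 : u k != 0 by apply: contraNneq uks => ->; rewrite mul0r.
apply: quadratic_descent_coord; near=> t.
have t_range : 0 <= t <= `|u k|.
  apply/andP; split; near: t; first exact: nbhs_right_ge.
  by apply: nbhs_right_le; rewrite normr_gt0.
have offdiag : \sum_(j | j != k)
    (`|u k * u j - s k * s j + t * - Num.sg (u k) * u j| - `|u k * u j - s k * s j|)
    <= t * (agreement k - `|u k|).
  rewrite [agreement k](bigD1 k) //= ifT; last first.
    by rewrite -expr2 lt0r sqr_ge0 andbT expf_neq0.
  rewrite [X in _ <= t * X]addrC addKr mulr_sumr; apply: ler_sum => j _.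
  case: ifP => same.
    have := ler_normD (u k * u j - s k * s j) (t * - Num.sg (u k) * u j).
    rewrite !normrM normrN normr_sg uk0 mulr1 ger0_norm; [lra | by case/andP: t_range].
  rewrite offdiag_toward0 ?mulrN //.
  have -> : u k * u j * (s k * s j) = u k * s k * (u j * s j) by ring.
  by rewrite leNgt same.
have diag := diag_toward0 _ (s k ^+ 2) _ uk0 t_range.
have agree_t : t * agreement k <= 0 by rewrite mulr_ge0_le0 //; case/andP: t_range.
move: offdiag diag; rewrite /coord_change mulrBr.
set S := \sum_(j | _) _; set D := `|_| - _.
lra.
Unshelve. all: by end_near.
Qed.

(* For u >= 0 and sg = +-1, the first-order rate of change of f along sg e_k
   when u k <> s k. *)
Definition slope k (sg : R) : R :=
  \sum_j (if sg * (u k * u j - s k * s j) < 0 then -1 else 1) * u j.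

Hypothesis u_ge0 : forall j, 0 <= u j.

Lemma near_offdiag_slope k sg : `|sg| = 1 -> sg * (u k * u k - s k * s k) < 0 ->
  \forall t \near 0^'+, \sum_(j | j != k)
      (`|u k * u j - s k * s j + t * sg * u j| - `|u k * u j - s k * s j|)
    <= t * (slope k sg + u k).
Proof.
move=> sg1 sg_kk.
have terms : \forall t \near 0^'+, forall j,
    `|u k * u j - s k * s j + t * sg * u j| - `|u k * u j - s k * s j|
    <= t * ((if sg * (u k * u j - s k * s j) < 0 then -1 else 1) * u j).
  apply: filter_forall => j.
  have small : \forall t \near 0^'+,
      sg * (u k * u j - s k * s j) < 0 -> t * u j <= `|u k * u j - s k * s j|.
    have [sgA|sgA] := boolp.pselect (sg * (u k * u j - s k * s j) < 0); last first.
      by apply: nearW => t /sgA.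
    have A_gt0 : 0 < `|u k * u j - s k * s j|.
      by rewrite normr_gt0; apply: contraTneq sgA => ->; rewrite mulr0 ltxx.
    by near=> t => _; near: t; exact: near0_mul_le.
  apply: filterS2 (nbhs_right_ge 0) small => t t_ge0.
  exact: norm_step_signed.
apply: filterS2 (nbhs_right_ge 0) terms => t t_ge0 tj.
apply: le_trans (ler_sum _ (fun j _ => tj j)) _.
rewrite -mulr_sumr ler_wpM2l // [slope _ _](bigD1 k) //= ifT // mulN1r.
by rewrite addrAC addNr add0r.
Unshelve. all: by end_near.
Qed.

Lemma descent_up k : u k < s k -> slope k 1 <= 0 ->
  quadratic_descent (fobj s) u (coordv k 1).
Proof.
move=> uk_lt slope_le0.
have uk_ge0 := u_ge0 k.
have kk : 1 * (u k * u k - s k * s k) < 0 by rewrite mul1r subr_lt0; nra.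
have offdiag := near_offdiag_slope k _ (normr1 R) kk.
have small : \forall t \near 0^'+, 0 <= t /\ u k + t < s k.
  near=> t; split; near: t; first exact: nbhs_right_ge.
  by near=> t; rewrite -ltrBrDl; near: t; apply: nbhs_right_lt; rewrite subr_gt0.
apply: quadratic_descent_coord; apply: filterS2 small offdiag => t [t_ge0 ukt].
rewrite /coord_change !mulr1 diag_up // mulrDr.
have : t * slope k 1 <= 0 by rewrite mulr_ge0_le0.
lra.
Unshelve. all: by end_near.
Qed.

Lemma descent_down k : 0 <= s k -> s k < u k -> slope k (-1) < 0 ->
  quadratic_descent (fobj s) u (coordv k (-1)).
Proof.
move=> sk_ge0 sk_lt slope_lt0.
have kk : -1 * (u k * u k - s k * s k) < 0 by rewrite mulN1r oppr_lt0 subr_gt0; nra.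
have offdiag := near_offdiag_slope k _ (normrN1 R) kk.
have small : \forall t \near 0^'+, [/\ 0 <= t, s k < u k - t & t < - slope k (-1)].
  near=> t; split; near: t; first exact: nbhs_right_ge.
  - by near=> t; rewrite ltrBrDl -ltrBrDr; near: t; apply: nbhs_right_lt; rewrite subr_gt0.
  - by apply: nbhs_right_lt; rewrite oppr_gt0.
apply: quadratic_descent_coord; apply: filterS2 small offdiag => t [t_ge0 ukt t_small].
rewrite /coord_change !mulrN1 diag_down // mulrDr.
have : t * slope k (-1) <= - t ^+ 2 by rewrite expr2 -mulrN ler_wpM2l //; lra.
lra.
Unshelve. all: by end_near.
Qed.

Lemma slope_all_neg k sg :
    (forall j, 0 < u j -> sg * (u k * u j - s k * s j) < 0) ->
  slope k sg = - \sum_j u j.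
Proof.
move=> neg; rewrite -sumrN; apply: eq_bigr => j _.
have [uj0|uj_gt0] := eqVneq (u j) 0; first by rewrite uj0 mulr0 oppr0.
by rewrite neg ?mulN1r // lt0r uj_gt0 u_ge0.
Qed.

Hypothesis s_ge0 : forall j, 0 <= s j.

Lemma slope_opposite a b : u a < s a -> s b < u b -> slope a 1 + slope b (-1) <= 0.
Proof.
move=> ua ub; rewrite -big_split /=; apply: sumr_le0 => j _.
have := u_ge0 j; have := s_ge0 j; have := u_ge0 a; have := s_ge0 b.
rewrite -mulrDl mul1r mulN1r oppr_lt0 subr_gt0 => sb ua0 sj uj.
case: ifP => [_|/negbT]; case: ifP => [_|/negbT]; rewrite -?leNgt; try nra.
move=> h1 h2.
have key : (s a * u b - u a * s b) * s j <= 0 by nra.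
have pos : 0 < s a * u b - u a * s b by nra.
have sj0 : s j = 0 by apply/eqP; rewrite eq_le sj andbT -(pmulr_rle0 _ pos).
move: h2; rewrite sj0 mulr0; nra.
Qed.

Lemma nonneg_descent : 0 < fobj s u -> exists w, quadratic_descent (fobj s) u w.
Proof.
move=> f_gt0.
have [j ujs] : exists j, u j != s j.
  apply: boolp.contrapT => no_j; move: f_gt0.
  rewrite (_ : u = s) ?fobj_self ?ltxx //; apply: boolp.funext => i.
  by apply/eqP/negPn/negP => uis; apply: no_j; exists i.
have [[a ua]|no_a] := boolp.pselect (exists a, u a < s a);
  have [[b ub]|no_b] := boolp.pselect (exists b, s b < u b).
- have := slope_opposite _ _ ua ub.
  have [up _|up opp] := lerP (slope a 1) 0.
    by exists (coordv a 1); apply: descent_up.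
  by exists (coordv b (-1)); apply: descent_down => //; lra.
- exists (coordv a 1); apply: descent_up => //.
  rewrite slope_all_neg ?oppr_le0 ?sumr_ge0 // => l ul.
  have : u l <= s l by rewrite leNgt; apply/negP => sl; apply: no_b; exists l.
  have := u_ge0 a; rewrite mul1r; nra.
- exists (coordv b (-1)); apply: descent_down => //.
  rewrite slope_all_neg; last first.
    move=> l ul; have : s l <= u l by rewrite leNgt; apply/negP => sl; apply: no_a; exists l.
    have := s_ge0 b; rewrite mulN1r oppr_lt0 subr_gt0; nra.
  rewrite oppr_lt0 (bigD1 b) //=.
  have : 0 <= \sum_(l | l != b) u l by apply: sumr_ge0 => l _; exact: u_ge0.
  have := s_ge0 b; lra.
- by move: ujs; rewrite neq_lt => /orP[uj|sj]; [case: no_a | case: no_b]; exists j.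
Qed.

End CoordinateMoves.

Lemma fobj_descent {R : realType} {n : nat} (s u : 'I_n -> R) :
  0 < fobj s u -> exists w, quadratic_descent (fobj s) u w.
Proof.
move=> f_gt0.
have [[k [uks agree]]|no_shrink] :=
  boolp.pselect (exists k, u k * s k != 0 /\ agreement s u k <= 0).
  by exists (coordv k (- Num.sg (u k))); apply: descent_toward0.
have same_sign i j : 0 <= u i * s i * (u j * s j).
  rewrite leNgt; apply/negP => opp.
  have agree_gt0 k : u k * s k != 0 -> 0 < agreement s u k.
    by move=> uks; rewrite ltNge; apply/negP => agree; apply: no_shrink; exists k.
  have ui : u i * s i != 0 by apply: contraTneq opp => ->; rewrite mul0r ltxx.
  have uj : u j * s j != 0 by apply: contraTneq opp => ->; rewrite mulr0 ltxx.
  have := agreement_opposite s u i j opp; have := agree_gt0 _ ui; have := agree_gt0 _ uj.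
  lra.
have [eps eps2 eps_ge0] := common_sign _ (fun j => u j * s j) same_sign.
pose e j : R := if eps * u j + s j < 0 then -1 else 1.
pose d j := eps * e j.
have e2 j : e j ^+ 2 = 1 by rewrite /e; case: ifP; rewrite ?sqrrN expr1n.
have d2 j : d j ^+ 2 = 1 by rewrite /d exprMn eps2 e2 mul1r.
have de i j : d i * d j = e i * e j by rewrite /d mulrACA -expr2 eps2 mul1r.
have aligned j : 0 <= e j * (eps * u j) /\ 0 <= e j * s j.
  by apply: align_sign; rewrite -mulrA.
have [w descent] : exists w,
    quadratic_descent (fobj (fun i => e i * s i)) (fun i => d i * u i) w.
  apply: nonneg_descent; last by rewrite fobj_signed.
  - by move=> j; rewrite /d mulrAC mulrC; case: (aligned j).
  - by move=> j; case: (aligned j).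
by exists (fun i => d i * w i); apply: quadratic_descent_signed descent.
Qed.

Theorem corollary2 (R : realType) (n : nat) (us u : 'I_n -> R) :
  second_order_stationary (fobj us) u -> global_minimizer (fobj us) u.
Proof.
move=> [_ sosp] y; apply: le_trans (fobj_ge0 us y).
rewrite leNgt; apply/negP => /fobj_descent[w /second_subderiv_lt0].
by rewrite ltNge sosp.
Qed.
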